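(* Let $(M,d)$ be a locally compact Hadamard space, $o\in M$, and $f:M\to\mathbb{R}$ a continuous convex function which is unbounded from below and decreases linearly. Let $\tilde f:M\to\mathbb{R}$ be a continuous convex function with $|f-\tilde f|$ bounded. Then $\tilde f$ is unbounded from below and decreases linearly, and $\gamma_{M,o,\tilde f}=\gamma_{M,o,f}$, $a_{M,o,\tilde f}=a_{M,o,f}$.
   Context: For $(M,o,f)$: $x_s$ is the unique minimizer of $f$ on the closed ball $B(o,s)$ and $\gamma_s$ the geodesic from $o$ to $x_s$; $f$ decreases linearly if $\liminf_{s\to\infty}f(x_s)/s<0$. The fastest shrinking geodesic $\gamma_{M,o,f}$ is the pointwise limit of $\gamma_s$ as $s\to\infty$, and the shrinking rate is $a_{M,o,f}=-\lim_{s\to\infty}\frac1s\min_{x\in B(o,s)}f(x)$. *)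

From HB Require Import structures.
From mathcomp Require Import all_boot all_order all_algebra.
From mathcomp Require Import all_classical all_reals all_analysis.
Set Implicit Arguments.
Unset Strict Implicit.
Unset Printing Implicit Defensive.
Import Order.TTheory GRing.Theory Num.Theory.
Import numFieldNormedType.Exports.
Local Open Scope classical_set_scope.
Local Open Scope ring_scope.

Section Hadamard.
Context {R : realType} {M : metricType R}.

Local Notation d := (@mdist R M).

Definition complete_metric : Prop :=
  forall F : set_system M, ProperFilter F -> cauchy F -> exists x : M, F --> x.

Definition geodesic01 (x y : M) (c : R -> M) : Prop :=
  c 0 = x /\ c 1 = y /\
  forall s t, 0 <= s <= 1 -> 0 <= t <= 1 -> d (c s) (c t) = `|s - t| * d x y.

Definition geodesic_space : Prop := forall x y : M, exists c, geodesic01 x y c.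

(* CAT(0) in the form of the (Bruhat--Tits) CN inequality along geodesics. *)
Definition CN_inequality : Prop :=
  forall (x y z : M) (c : R -> M) (t : R), geodesic01 x y c -> 0 <= t <= 1 ->
    d z (c t) ^+ 2 <= (1 - t) * d z x ^+ 2 + t * d z y ^+ 2
                      - t * (1 - t) * d x y ^+ 2.

Definition hadamard_space : Prop :=
  complete_metric /\ geodesic_space /\ CN_inequality.

Definition convex_fun (f : M -> R) : Prop :=
  forall (x y : M) (c : R -> M) (t : R), geodesic01 x y c -> 0 <= t <= 1 ->
    f (c t) <= (1 - t) * f x + t * f y.

Definition unbounded_below (f : M -> R) : Prop := forall r : R, exists x, f x < r.

Definition cball (o : M) (s : R) : set M := [set y | d o y <= s].

Definition is_ball_minimizer (f : M -> R) (o : M) (s : R) (x : M) : Prop :=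
  cball o s x /\ forall y, cball o s y -> f x <= f y.

(* x_s : the minimizer of f on B(o,s) (unique in the situation of the paper). *)
Definition xs (f : M -> R) (o : M) (s : R) : M := xget o (is_ball_minimizer f o s).

Definition unit_geodesic (o x : M) (c : R -> M) : Prop :=
  (forall t, t <= 0 -> c t = o) /\ (forall t, d o x <= t -> c t = x) /\
  forall s t, 0 <= s <= d o x -> 0 <= t <= d o x -> d (c s) (c t) = `|s - t|.

Definition geod_seg (o x : M) : R -> M :=
  xget (fun=> o) (unit_geodesic o x).

Definition gamma_s (f : M -> R) (o : M) (s : R) : R -> M := geod_seg o (xs f o s).

Definition decreases_linearly (f : M -> R) (o : M) : Prop :=
  (limf_einf (fun s : R => (f (xs f o s) / s)%:E) (pinfty_nbhs R) < 0)%E.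

Definition is_fastest_shrinking_geodesic (f : M -> R) (o : M) (c : R -> M) : Prop :=
  forall t : R, 0 <= t -> gamma_s f o s t @[s --> +oo] --> c t.

Definition is_shrinking_rate (f : M -> R) (o : M) (a : R) : Prop :=
  - (f (xs f o s) / s) @[s --> +oo] --> a.

End Hadamard.

From HB Require Import structures.
From mathcomp Require Import all_boot all_order all_algebra.
From mathcomp Require Import all_classical all_reals all_analysis.
From mathcomp Require Import ring lra.
Import Order.TTheory GRing.Theory Num.Theory.
Import numFieldNormedType.Exports.
Local Open Scope classical_set_scope.
Local Open Scope ring_scope.

(* For a continuous convex g write m(s) = g(x_s) for its minimum on B(o,s).
   1. In a complete CAT(0) space this minimum is attained: in the sublevel
      sets {g <= inf + e} of the ball, points of almost minimal distance to o
      form a Cauchy net as e -> 0, by the CAT(0) midpoint inequality.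
   2. m is convex in s, so the slope q(s) = (m(s) - g(o))/s increases to its
      supremum L and m(r) - m(r') <= L (r - r').  Hence g(x_s)/s -> L, i.e.
      the shrinking rate is -L, and "g decreases linearly" means L < 0; in
      that case d(o,x_s) = s.
   3. A perturbation by at most C changes m by at most C, so L is unchanged.
   4. If L < 0, the points at distance R from o on the geodesics gamma_s of
      two such functions are close for large R and s (midpoint inequality),
      and comparison of geodesics issued from o transports this to every
      t <= R.  Thus t |-> gamma_s(t) converges as s -> +oo, and the limits
      for f and ~f agree. *)

Lemma le_of_sqr_le (R : realFieldType) (a b : R) :
  0 <= a -> 0 <= b -> a ^+ 2 <= b ^+ 2 -> a <= b.
Proof. by move=> *; nra. Qed.

Lemma lt_of_sqr_lt (R : realFieldType) (a b : R) :
  0 <= a -> 0 < b -> a ^+ 2 < b ^+ 2 -> a < b.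
Proof. by move=> *; nra. Qed.

Lemma half_in01 (R : realFieldType) : 0 <= (1 / 2 : R) <= 1.
Proof. by apply/andP; split; [rewrite divr_ge0 | rewrite ler_pdivrMr //=; lra]. Qed.

Lemma ratio_in01 (R : realFieldType) (s D : R) : 0 < D -> 0 <= s <= D -> 0 <= s / D <= 1.
Proof.
move=> D0 /andP[s0 sD]; apply/andP; split; first by rewrite divr_ge0 // ltW.
by rewrite ler_pdivrMr // mul1r.
Qed.

Lemma inv_lt_half (R : realFieldType) (e a : R) : 0 < e -> 2 / e < a -> a^-1 < e / 2.
Proof.
move=> e0 h; have a0 : 0 < a by apply: lt_trans h; rewrite divr_gt0.
rewrite ltr_pdivrMr // in h.
rewrite ltr_pdivlMr // -(ltr_pM2l a0) mulrA mulfV ?gt_eqF // mul1r; lra.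
Qed.

Lemma limf_einf_pinfty {R : realType} {h : R -> R} {l : R} :
  (forall e, 0 < e -> exists S, forall s, S < s -> `|l - h s| < e) ->
  limf_einf (fun s => (h s)%:E) (pinfty_nbhs R) = l%:E.
Proof.
move=> hl; rewrite limf_einfE; apply/le_anti/andP; split.
- apply/lee_addgt0Pr => e e0; apply: ge_ereal_sup => _ [V [S0 [_ HV]] <-].
  have [S HS] := hl e e0.
  pose s := `|S0| + `|S| + 1.
  have [hS0 hS] := (ler_norm S0, ler_norm S).
  have [nS0 nS] := (normr_ge0 S0, normr_ge0 S).
  apply: ge_ereal_inf; exists (h s)%:E; first by exists s => //; apply: HV; rewrite /s; lra.
  by rewrite -EFinD lee_fin; have := HS s ltac:(rewrite /s; lra); rewrite ltr_norml => /andP[]; lra.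
- apply/lee_subgt0Pr => e e0; have [S HS] := hl e e0.
  apply: le_ereal_sup_tmp; exists (ereal_inf ((fun s => (h s)%:E) @` [set s | S < s])).
    by exists [set s | S < s] => //; exists S; split; [exact: num_real|].
  apply: le_ereal_inf_tmp => _ [s Ss <-]; rewrite -EFinB lee_fin.
  by have := HS s Ss; rewrite ltr_norml => /andP[]; lra.
Qed.

Section MetricFacts.
Context {R : realType} {M : metricType R}.
Local Notation d := (@mdist R M).

Lemma geodesic01_dist {x y : M} {c : R -> M} {t : R} :
  geodesic01 x y c -> 0 <= t <= 1 -> d x (c t) = t * d x y.
Proof.
case=> c0 [_ H] ht; rewrite -{1}c0 (H 0 t) ?lexx ?ler01 //.
by rewrite sub0r normrN ger0_norm //; case/andP: ht.
Qed.

(* A geodesic on [0,1] reparametrized by arc length gives a unit geodesic. *)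
Lemma unit_geodesic_exists (hgeo : geodesic_space (M := M)) (x y : M) :
  exists c, unit_geodesic x y c.
Proof.
have [<-|/eqP xy] := pselect (x = y).
  exists (fun _ => x); split=> //; split=> // s t; rewrite mdistxx.
  move=> /andP[s0 s1] /andP[t0 t1].
  by rewrite (@le_anti _ _ s 0) ?s0 ?s1 // (@le_anti _ _ t 0) ?t0 ?t1 // subrr normr0.
have D0 : 0 < d x y by rewrite mdist_gt0.
have [g [g0 [g1 Hg]]] := hgeo x y.
pose c t := if t <= 0 then x else if d x y <= t then y else g (t / d x y).
have c_in s : 0 <= s <= d x y -> c s = g (s / d x y).
  move=> /andP[s0 sD]; rewrite /c; case: ifPn => [s0'|_].
    by rewrite (@le_anti _ _ s 0) ?s0 ?s0' // mul0r g0.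
  case: ifPn => // Ds.
  by rewrite (@le_anti _ _ s (d x y)) ?sD ?Ds // divff ?g1 // gt_eqF.
exists c; split; first by move=> t t0; rewrite /c t0.
split; first by move=> t Dt; rewrite /c leNgt (lt_le_trans D0 Dt) /= Dt.
move=> s t hs ht; rewrite (c_in s hs) (c_in t ht) Hg ?ratio_in01 //.
by rewrite -mulrBl normrM normfV (gtr0_norm D0) divfK // gt_eqF.
Qed.

Lemma geod_seg_spec (hgeo : geodesic_space (M := M)) (x y : M) :
  unit_geodesic x y (geod_seg x y).
Proof. exact: (xgetPex _ (unit_geodesic_exists hgeo x y)). Qed.

Lemma unit_geodesic_dist {o x : M} {c : R -> M} {r : R} :
  unit_geodesic o x c -> 0 <= r <= d o x -> d o (c r) = r.
Proof.
case=> c0 [_ H] hr; rewrite -{1}(c0 0 (lexx 0)) (H 0 r) ?lexx ?mdist_ge0 //.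
by rewrite sub0r normrN ger0_norm //; case/andP: hr.
Qed.

Lemma unit_geodesic_restrict {o x : M} {c : R -> M} {r : R} :
  unit_geodesic o x c -> 0 <= r <= d o x -> geodesic01 o (c r) (fun u => c (u * r)).
Proof.
move=> hc hr; have dr := unit_geodesic_dist hc hr.
case: hc => c0 [_ H]; case/andP: hr => r0 rD.
split; first by rewrite mul0r c0.
split; first by rewrite mul1r.
move=> s t /andP[s0 s1] /andP[t0 t1].
rewrite dr (H (s * r) (t * r)); first by rewrite -mulrBl normrM (ger0_norm r0).
  by apply/andP; split; [exact: mulr_ge0|nra].
by apply/andP; split; [exact: mulr_ge0|nra].
Qed.

Lemma continuous_mdistP {g : M -> R} : continuous g -> forall x e, 0 < e ->
  exists2 del, 0 < del & forall y, d x y < del -> `|g x - g y| < e.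
Proof.
move=> gc x e e0; have := gc x.
move/cvgrPdist_lt/(_ e e0)/metricType_numDomainType.nbhs_mdistP.
by case=> del del0 H; exists del => // y hy; exact: H.
Qed.

Lemma cvg_pinfty_mdistP (u : R -> M) (x : M) : u a @[a --> +oo] --> x <->
  forall e, 0 < e -> exists S, forall a, S < a -> d x (u a) < e.
Proof.
split=> [hx e e0|H].
  by have [S [_ HS]] := metricType_numDomainType.cvgr_dist_lt hx e0; exists S.
apply/metricType_numDomainType.cvgrPdist_lt => e e0.
by have [S HS] := H e e0; exists S; split; [exact: num_real|exact: HS].
Qed.

Lemma pinfty_cauchy_cvg (hcomp : complete_metric (M := M)) (u : R -> M) :
  (forall e, 0 < e -> exists S, forall a b, S < a -> S < b -> d (u a) (u b) < e) ->
  exists x : M, u a @[a --> +oo] --> x.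
Proof.
move=> H.
have PF : ProperFilter (u @ pinfty_nbhs R) by exact: fmap_proper_filter.
apply: (hcomp _ PF).
apply: (cauchy_exP (u @ pinfty_nbhs R)) => e e0; have [S HS] := H e e0.
exists (u (S + 1)), S; split; first exact: num_real.
by move=> a Sa /=; rewrite ballEmdist /=; apply: HS => //; lra.
Qed.

Lemma cball_limit (o : M) (s : R) (u : R -> M) (x : M) :
  (forall a, 0 < a -> cball o s (u a)) -> u a @[a --> +oo] --> x -> cball o s x.
Proof.
move=> hu /cvg_pinfty_mdistP hx; rewrite /cball /=; apply/ler_addgt0Pr => e e0.
have [S HS] := hx e e0; pose a := `|S| + 1.
have [Sa a0] : S < a /\ 0 < a by rewrite /a; have := ler_norm S; have := normr_ge0 S; lra.
have := HS a Sa; have := hu a a0; rewrite /cball /=.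
have := metric_triangle o (u a) x; rewrite (metric_sym (u a) x); lra.
Qed.

End MetricFacts.

Section CAT0.
Context {R : realType} {M : metricType R}.
Local Notation d := (@mdist R M).
Hypothesis hCN : CN_inequality (M := M).

Lemma dist_convex {x y : M} (z : M) {c : R -> M} {t : R} :
  geodesic01 x y c -> 0 <= t <= 1 -> d z (c t) <= (1 - t) * d z x + t * d z y.
Proof.
move=> hc ht; have := hCN _ _ z _ _ hc ht; case/andP: ht => t0 t1 H.
have h1 := metric_triangle z y x; have h2 := metric_triangle z x y.
rewrite (metric_sym y x) in h1.
have := mdist_ge0 z x; have := mdist_ge0 z y; have := mdist_ge0 x y; move=> he hb ha.
apply: le_of_sqr_le; [exact: mdist_ge0|nra|]; apply: (le_trans H).
have : 0 <= t * (1 - t) * ((d x y - d z x + d z y) * (d x y + d z x - d z y)).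
  by apply: mulr_ge0; [nra|apply: mulr_ge0; lra].
nra.
Qed.

Lemma cball_convex {x y o : M} {c : R -> M} {t s : R} : geodesic01 x y c -> 0 <= t <= 1 ->
  cball o s x -> cball o s y -> cball o s (c t).
Proof.
rewrite /cball /= => hc ht hx hy; apply: (le_trans (dist_convex o hc ht)).
by case/andP: ht => t0 t1; nra.
Qed.

Lemma midpoint_ineq {x y : M} (o : M) {c : R -> M} : geodesic01 x y c ->
  d o (c (1 / 2)) ^+ 2 <= (d o x ^+ 2 + d o y ^+ 2) / 2 - d x y ^+ 2 / 4.
Proof. by move=> hc; have := hCN _ _ o _ _ hc (half_in01 R); lra. Qed.

Lemma midpoint_close {x y : M} (o : M) {c : R -> M} (r th : R) : geodesic01 x y c ->
  d o x ^+ 2 < r + th -> d o y ^+ 2 < r + th -> r - th <= d o (c (1 / 2)) ^+ 2 ->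
  d x y ^+ 2 < 8 * th.
Proof. by move=> hc; have := midpoint_ineq o hc; lra. Qed.

Lemma geodesic_comparison {o x y : M} {c c' : R -> M} {t : R} :
  geodesic01 o x c -> geodesic01 o y c' -> 0 <= t <= 1 -> d (c t) (c' t) <= t * d x y.
Proof.
move=> hc hc' ht.
have H1 := hCN _ _ (c t) _ _ hc' ht; have H2 := hCN _ _ y _ _ hc ht.
rewrite (metric_sym (c t) o) (geodesic01_dist hc ht) (metric_sym (c t) y) in H1.
case/andP: ht => t0 t1.
apply: le_of_sqr_le; [exact: mdist_ge0|apply: mulr_ge0 => //; exact: mdist_ge0|].
have H3 := ler_wpM2l t0 H1.
rewrite (metric_sym y o) (metric_sym y x) in H2; nra.
Qed.

Section Complete.
Hypotheses (hgeo : geodesic_space (M := M)) (hcomp : complete_metric (M := M)).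

(* Let rho e bound d(o,.)^2 from below on K e and increase to rho0 as e -> 0.
   If midpoints of K e and K e' lie in K (e + e'), points u a of K a^-1 within
   a^-1 of that bound form a Cauchy net: by the midpoint inequality, u a and
   u b are close since their midpoint is not much closer to o than rho0. *)
Lemma almost_closest_cauchy (o : M) (K : R -> set M) (rho : R -> R) (rho0 : R)
    (u : R -> M) :
  (forall e e' x y c, 0 < e -> 0 < e' -> K e x -> K e' y -> geodesic01 x y c ->
     K (e + e') (c (1 / 2))) ->
  (forall e y, K e y -> rho e <= d o y ^+ 2) ->
  (forall e, 0 < e -> rho e <= rho0) ->
  (forall th, 0 < th -> exists2 e1, 0 < e1 &
     forall e, 0 < e -> e <= e1 -> rho0 - th < rho e) ->
  (forall a, 0 < a -> K a^-1 (u a) /\ d o (u a) ^+ 2 < rho a^-1 + a^-1) ->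
  forall eta, 0 < eta -> exists S, forall a b, S < a -> S < b -> d (u a) (u b) < eta.
Proof.
move=> Kmid rho_le rho_le0 rho_adh u_spec eta eta0.
pose th := eta ^+ 2 / 8.
have th0 : 0 < th by rewrite divr_gt0 // exprn_gt0.
have [e1 e10 He1] := rho_adh th th0.
have [p1 p2] : 0 < 2 / e1 /\ 0 < 2 / th by split; rewrite divr_gt0.
exists (2 / e1 + 2 / th) => a b Sa Sb.
have [a0 b0] : 0 < a /\ 0 < b by split; lra.
have [ha1 ha2] : a^-1 < e1 / 2 /\ a^-1 < th / 2 by split; apply: inv_lt_half => //; lra.
have [hb1 hb2] : b^-1 < e1 / 2 /\ b^-1 < th / 2 by split; apply: inv_lt_half => //; lra.
have [ea0 eb0] : 0 < a^-1 /\ 0 < b^-1 by split; rewrite invr_gt0.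
have [Ka da] := u_spec a a0; have [Kb db] := u_spec b b0.
have [c hc] := hgeo (u a) (u b).
have mid := rho_le _ _ (Kmid _ _ _ _ _ ea0 eb0 Ka Kb hc).
have := He1 (a^-1 + b^-1) (addr_gt0 ea0 eb0) ltac:(lra).
have := rho_le0 _ ea0; have := rho_le0 _ eb0; move=> h1 h2 h3.
apply: lt_of_sqr_lt; [exact: mdist_ge0|exact: eta0|].
have -> : eta ^+ 2 = 8 * th by rewrite /th; field.
by apply: (midpoint_close o rho0 th hc); lra.
Qed.

Lemma minimal_point_limit (o : M) (K : R -> set M) (B : R) :
  (forall e, 0 < e -> K e !=set0) ->
  (forall e e', e <= e' -> K e `<=` K e') ->
  (forall e y, K e y -> d o y <= B) ->
  (forall e e' x y c, 0 < e -> 0 < e' -> K e x -> K e' y -> geodesic01 x y c ->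
     K (e + e') (c (1 / 2))) ->
  exists u : R -> M, exists2 x : M,
    (forall a, 0 < a -> K a^-1 (u a)) & u a @[a --> +oo] --> x.
Proof.
move=> Kne KS Kbd Kmid.
pose W e := [set d o y ^+ 2 | y in K e].
have W_inf e : 0 < e -> has_inf (W e).
  move=> e0; split; first by have [y hy] := Kne e e0; exists (d o y ^+ 2), y.
  by exists 0 => _ [y _ <-]; exact: sqr_ge0.
pose rho e := inf (W e).
have rho_le e y : K e y -> rho e <= d o y ^+ 2.
  by move=> hy; apply: ge_inf; [exists 0 => _ [z _ <-]; exact: sqr_ge0|exists y].
have rho_mono e e' : 0 < e -> e <= e' -> rho e' <= rho e.
  move=> e0 ee'; apply: lb_le_inf; first by case: (W_inf e e0).
  by move=> _ [y hy <-]; apply: rho_le; exact: KS ee' y hy.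
pose Z := [set rho e | e in [set e | 0 < e]].
have Z_sup : has_sup Z.
  split; first by exists (rho 1); exists 1 => //=.
  exists (B ^+ 2) => _ [e e0 <-]; have [y hy] := Kne e e0.
  apply: (le_trans (rho_le _ _ hy)); have := Kbd _ _ hy; have := mdist_ge0 o y; nra.
have rho_le0 e : 0 < e -> rho e <= sup Z.
  by move=> e0; apply: ub_le_sup; [case: Z_sup|exists e].
have rho_adh th : 0 < th -> exists2 e1, 0 < e1 &
    forall e, 0 < e -> e <= e1 -> sup Z - th < rho e.
  move=> th0; have [_ [e1 e10 <-] hv] := sup_adherent th0 Z_sup.
  by exists e1 => // e e0 ee1; apply: (lt_le_trans hv); exact: rho_mono.
have pex a : 0 < a -> exists y, K a^-1 y /\ d o y ^+ 2 < rho a^-1 + a^-1.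
  move=> a0; have ea : 0 < a^-1 by rewrite invr_gt0.
  by have [_ [y hy <-] hv] := inf_adherent ea (W_inf _ ea); exists y.
pose u a := xget o (fun y => K a^-1 y /\ d o y ^+ 2 < rho a^-1 + a^-1).
have u_spec a : 0 < a -> K a^-1 (u a) /\ d o (u a) ^+ 2 < rho a^-1 + a^-1.
  by move=> a0; exact: (xgetPex o (pex a a0)).
have [x ux] := pinfty_cauchy_cvg hcomp u
  (almost_closest_cauchy _ _ _ _ _ Kmid rho_le rho_le0 rho_adh u_spec).
by exists u, x => // a a0; case: (u_spec a a0).
Qed.

Section ConvexFun.
Variables (g : M -> R) (o : M).
Hypotheses (gc : continuous g) (gconv : convex_fun g).

(* By continuity at o and convexity along geodesics from o, g is bounded
   below on every ball. *)
Lemma bounded_below_on_balls (s : R) : exists lb, forall y, d o y <= s -> lb <= g y.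
Proof.
have [del del0 Hd] := continuous_mdistP gc o 1 ltr01.
have sd : 0 < `|s| + del by rewrite ltr_wpDl.
pose t := del / (2 * (`|s| + del)).
have t0 : 0 < t by rewrite divr_gt0 // mulr_gt0.
have t1 : t <= 1 by rewrite ler_pdivrMr ?mulr_gt0 // mul1r; have := normr_ge0 s; lra.
have ts : t * `|s| < del by rewrite /t mulrAC ltr_pdivrMr ?mulr_gt0 //; have := normr_ge0 s; nra.
exists (g o - 1 / t) => y hy.
have [c hc] := hgeo o y.
have ht : 0 <= t <= 1 by rewrite t1 ltW.
have hz : d o (c t) < del.
  rewrite (geodesic01_dist hc ht); apply: le_lt_trans ts.
  by rewrite ler_pM2l //; apply: (le_trans hy); exact: ler_norm.
have := Hd _ hz; rewrite ltr_norml => /andP[h1 h2].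
have hcv := gconv o y c t hc ht.
have e : t * (1 / t) = 1 by rewrite mul1r divff // gt_eqF.
by rewrite -(ler_pM2l t0) mulrBr e; nra.
Qed.

(* The minimum of g on B(o,s) is attained: apply minimal_point_limit to the
   sublevel sets {g <= inf + e} of the ball and pass to the limit. *)
Lemma ball_minimizer_exists (s : R) : 0 <= s -> exists x, is_ball_minimizer g o s x.
Proof.
move=> s0; pose V := [set g y | y in cball o s].
have V_inf : has_inf V.
  split; first by exists (g o), o => //; rewrite /cball /= mdistxx.
  by have [lb Hlb] := bounded_below_on_balls s; exists lb => _ [y hy <-]; exact: Hlb.
pose mu := inf V.
have mu_le y : cball o s y -> mu <= g y by move=> hy; apply: ge_inf; [case: V_inf|exists y].
pose K e := [set y | cball o s y /\ g y <= mu + e].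
have [u [x Ku ux]] : exists u : R -> M, exists2 x : M,
    (forall a, 0 < a -> K a^-1 (u a)) & u a @[a --> +oo] --> x.
  apply: (minimal_point_limit o K s).
  - move=> e e0; have [_ [y hy <-] hv] := inf_adherent e0 V_inf.
    by exists y; split => //; exact: ltW.
  - by move=> e e' ee' y [hy1 hy2]; split => //; apply: (le_trans hy2); rewrite lerD2l.
  - by move=> e y [].
  - move=> e e' y z c e0 e'0 [yB gy] [zB gz] hc.
    split; first exact: (cball_convex hc (half_in01 R) yB zB).
    by have := gconv y z c (1 / 2) hc (half_in01 R); lra.
exists x; split; first by apply: (cball_limit _ _ u x _ ux) => a a0; case: (Ku a a0).
move=> y hy; apply: (le_trans _ (mu_le y hy)); apply/ler_addgt0Pr => eta eta0.
have eta2 : 0 < eta / 2 by rewrite divr_gt0.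
have [del del0 Hd] := continuous_mdistP gc x (eta / 2) eta2.
have [S HS] := (cvg_pinfty_mdistP u x).1 ux del del0.
pose a := `|S| + 2 / eta + 1.
have [Sa a0 ha] : [/\ S < a, 0 < a & a^-1 < eta / 2].
  have := ler_norm S; have := normr_ge0 S; have := divr_gt0 (ltr0Sn R 1) eta0.
  by rewrite /a => h1 h2 h3; split; [lra|lra|apply: inv_lt_half => //; lra].
have := Hd _ (HS a Sa); case: (Ku a a0) => _ Kua.
by rewrite ltr_norml => /andP[h1 h2]; lra.
Qed.

Lemma xs_spec {s : R} : 0 <= s -> is_ball_minimizer g o s (xs g o s).
Proof. by move=> s0; exact: (xgetPex o (ball_minimizer_exists s s0)). Qed.

Definition ballmin (s : R) : R := g (xs g o s).

Lemma xs_in_ball {s : R} : 0 <= s -> d o (xs g o s) <= s.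
Proof. by move=> s0; case: (xs_spec s0). Qed.

Lemma ballmin_le {s : R} {y : M} : 0 <= s -> d o y <= s -> ballmin s <= g y.
Proof. by move=> s0 hy; case: (xs_spec s0) => _; apply. Qed.

Lemma ballmin0 : ballmin 0 = g o.
Proof.
have : d o (xs g o 0) = 0 by apply/le_anti; rewrite xs_in_ball ?mdist_ge0.
by rewrite /ballmin => /mdist_positivity <-.
Qed.

(* m is convex: interpolating between x_rh and x_S along a geodesic stays in
   the ball of the interpolated radius r. *)
Lemma ballmin_convex {rh r S : R} : 0 <= rh -> rh <= r -> r <= S -> rh < S ->
  ballmin r * (S - rh) <= (S - r) * ballmin rh + (r - rh) * ballmin S.
Proof.
move=> rh0 rhr rS rhS; have Sp : 0 < S - rh by rewrite subr_gt0.
have [c hc] := hgeo (xs g o rh) (xs g o S).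
pose t := (r - rh) / (S - rh).
have ht : 0 <= t <= 1 by apply: ratio_in01 => //; apply/andP; split; lra.
have et : t * (S - rh) = r - rh by rewrite /t divfK // gt_eqF.
have e2 : (1 - t) * (S - rh) = S - r by rewrite mulrBl mul1r et; ring.
have h1 := xs_in_ball rh0.
have h2 := xs_in_ball (le_trans (le_trans rh0 rhr) rS).
have hd := dist_convex o hc ht.
case/andP: ht => t0 t1.
have hdr : d o (c t) <= r.
  apply: (le_trans hd).
  have := ler_wpM2l t0 h2; have : (1 - t) * d o (xs g o rh) <= (1 - t) * rh.
    by apply: ler_wpM2l => //; lra.
  have : (1 - t) * rh + t * S = r by nra.
  lra.
have := le_trans (ballmin_le (le_trans rh0 rhr) hdr) (gconv _ _ _ _ hc (introT andP (conj t0 t1))).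
move=> /(ler_wpM2r (ltW Sp)); rewrite -[in X in _ -> X]e2 -[in X in _ -> X]et /ballmin.
by move=> H; apply: (le_trans H); rewrite le_eqVlt; apply/orP; left; apply/eqP; ring.
Qed.

Definition slope (s : R) : R := (ballmin s - g o) / s.

Lemma slope_mono {r s : R} : 0 < r -> r <= s -> slope r <= slope s.
Proof.
move=> r0 rs; have s0 : 0 < s by exact: lt_le_trans rs.
have := ballmin_convex (lexx 0) (ltW r0) rs s0; rewrite ballmin0 !subr0 => h.
by rewrite ler_pdivrMr // mulrAC ler_pdivlMr //; nra.
Qed.

Lemma slope_le0 {s : R} : 0 < s -> slope s <= 0.
Proof.
move=> s0; rewrite /slope ler_pdivrMr // mul0r subr_le0.
by apply: ballmin_le; [exact: ltW|rewrite mdistxx ltW].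
Qed.

Definition asym_slope : R := sup [set slope s | s in [set s | 0 < s]].

Lemma slope_has_sup : has_sup [set slope s | s in [set s | 0 < s]].
Proof.
split; first by exists (slope 1); exists 1 => //=.
by exists 0 => _ [s s0 <-]; exact: slope_le0.
Qed.

Lemma slope_le_asym {s : R} : 0 < s -> slope s <= asym_slope.
Proof. by move=> s0; apply: ub_le_sup; [case: slope_has_sup|exists s]. Qed.

Lemma asym_slope_adh {e : R} : 0 < e ->
  exists2 s0, 0 < s0 & forall s, s0 <= s -> asym_slope - e < slope s.
Proof.
move=> e0; have [_ [s0 s00 <-] hv] := sup_adherent e0 slope_has_sup.
by exists s0 => // s hs; apply: (lt_le_trans hv); exact: slope_mono.
Qed.

Lemma ballmin_slope {s : R} : 0 < s -> ballmin s = g o + s * slope s.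
Proof. by move=> s0; rewrite /slope mulrC divfK ?gt_eqF //; ring. Qed.

(* m decreases at least at rate -L on every interval: otherwise convexity
   would force a slope above L at a large radius. *)
Lemma ballmin_increment {rh r : R} : 0 <= rh -> rh <= r ->
  ballmin r - ballmin rh <= asym_slope * (r - rh).
Proof.
move=> rh0 rhr; have [<-|rhr'] := eqVneq rh r; first by rewrite !subrr mulr0.
have rhr2 : rh < r by rewrite lt_neqAle rhr' rhr.
rewrite leNgt; apply/negP => hX.
pose X := ballmin r - ballmin rh - asym_slope * (r - rh).
have X0 : 0 < X by rewrite /X subr_gt0.
pose K := rh * ballmin r - r * ballmin rh + (r - rh) * g o.
pose S := `|K| / X + r + 1.
have KX : 0 <= `|K| / X by rewrite divr_ge0 // ltW.
have rS : r <= S by rewrite /S; lra.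
have S0 : 0 < S by lra.
have h1 := ballmin_convex rh0 rhr rS ltac:(rewrite /S; lra).
have h2 : (r - rh) * ballmin S <= (r - rh) * (g o + S * asym_slope).
  apply: ler_wpM2l; first lra.
  rewrite (ballmin_slope S0) lerD2l; apply: ler_wpM2l; [exact: ltW|exact: slope_le_asym].
have h3 : `|K| < S * X by rewrite -ltr_pdivrMr // /S; lra.
have h4 := ler_norm K.
rewrite /X /K in X0 h3 h4; nra.
Qed.

Lemma dist_xs {s : R} : asym_slope < 0 -> 0 <= s -> d o (xs g o s) = s.
Proof.
move=> L0 s0; have hD := xs_in_ball s0; have D0 := mdist_ge0 o (xs g o s).
have h1 : ballmin (d o (xs g o s)) <= ballmin s by exact: ballmin_le.
have := ballmin_increment D0 hD.
by move=> h2; apply/le_anti; rewrite hD /=; nra.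
Qed.

Lemma gamma_s_spec (s : R) : unit_geodesic o (xs g o s) (gamma_s g o s).
Proof. exact: geod_seg_spec. Qed.

Lemma gamma_s_bound (s r : R) : asym_slope < 0 -> 0 <= r -> r <= s -> 0 < s ->
  g (gamma_s g o s r) <= g o + r * asym_slope.
Proof.
move=> L0 r0 rs s0; have Ds := dist_xs L0 (ltW s0).
have hs : 0 <= s <= d o (xs g o s) by rewrite Ds lexx ltW.
have ht : 0 <= r / s <= 1 by apply: ratio_in01 => //; rewrite r0 rs.
have := gconv _ _ _ _ (unit_geodesic_restrict (gamma_s_spec s) hs) ht.
rewrite divfK ?gt_eqF //.
have -> : gamma_s g o s s = xs g o s.
  by case: (gamma_s_spec s) => _ [H _]; apply: H; rewrite Ds.
have e : r / s * g (xs g o s) = r * slope s + r / s * g o.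
  by rewrite /slope /ballmin; field; rewrite gt_eqF.
rewrite e; have := ler_wpM2l r0 (slope_le_asym s0).
have : (1 - r / s) * g o + r / s * g o = g o by ring.
lra.
Qed.

(* Two points of the sphere of radius Rr on which g is nearly as small as
   g(o) + Rr L are close: their midpoint lies deeper inside the ball, where
   m is larger. *)
Lemma nearly_minimal_close {X Y : M} {Rr E : R} : asym_slope < 0 -> 0 < Rr -> 0 <= E ->
  d o X = Rr -> d o Y = Rr -> g X + g Y <= 2 * (g o + Rr * asym_slope) + 2 * E ->
  d X Y ^+ 2 <= 8 * Rr * (Rr * (asym_slope - slope Rr) + E) / (- asym_slope).
Proof.
move=> L0 R0 E0 dX dY hs; have [c hc] := hgeo X Y.
have h1 := midpoint_ineq o hc; rewrite dX dY in h1.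
have h2 := gconv _ _ _ _ hc (half_in01 R).
set w := c (1 / 2) in h1 h2.
have rh0 := mdist_ge0 o w.
have rhR : d o w <= Rr.
  by apply: le_of_sqr_le => //; [exact: ltW|]; have := sqr_ge0 (d X Y); lra.
have h3 : ballmin (d o w) <= g w by exact: ballmin_le.
have h4 := ballmin_increment rh0 rhR.
have h5 := ballmin_slope R0.
have H2 : d X Y ^+ 2 <= 8 * Rr * (Rr - d o w) by nra.
have H : (- asym_slope) * (Rr - d o w) <= Rr * (asym_slope - slope Rr) + E by lra.
rewrite ler_pdivlMr ?oppr_gt0 //.
have : 0 <= 8 * Rr by rewrite mulr_ge0 // ltW.
nra.
Qed.

(* The same closeness at any smaller distance r from o, by comparison of
   geodesics issued from o. *)
Lemma geodesics_close {x y : M} {c c' : R -> M} (r Rr E : R) :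
  asym_slope < 0 -> 0 <= r -> r <= Rr -> 0 < Rr -> 0 <= E ->
  unit_geodesic o x c -> unit_geodesic o y c' -> Rr <= d o x -> Rr <= d o y ->
  g (c Rr) + g (c' Rr) <= 2 * (g o + Rr * asym_slope) + 2 * E ->
  d (c r) (c' r) ^+ 2 <= 8 * r ^+ 2 * ((asym_slope - slope Rr) + E / Rr) / (- asym_slope).
Proof.
move=> L0 r0 rR R0 E0 hc hc' Rx Ry hs.
have hRx : 0 <= Rr <= d o x by rewrite Rx ltW.
have hRy : 0 <= Rr <= d o y by rewrite Ry ltW.
have ht : 0 <= r / Rr <= 1 by apply: ratio_in01 => //; rewrite r0 rR.
have := geodesic_comparison (unit_geodesic_restrict hc hRx) (unit_geodesic_restrict hc' hRy) ht.
rewrite /= divfK ?gt_eqF // => h1.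
have h2 := nearly_minimal_close L0 R0 E0 (unit_geodesic_dist hc hRx) (unit_geodesic_dist hc' hRy) hs.
have k0 : 0 <= r / Rr by case/andP: ht.
have h3 : d (c r) (c' r) ^+ 2 <= (r / Rr) ^+ 2 * d (c Rr) (c' Rr) ^+ 2.
  rewrite -exprMn; apply: lerXn2r; rewrite ?nnegrE ?mdist_ge0 //.
  by apply: mulr_ge0 => //; exact: mdist_ge0.
apply: (le_trans h3); apply: (le_trans (ler_wpM2l (sqr_ge0 (r / Rr)) h2)).
by rewrite le_eqVlt; apply/orP; left; apply/eqP; field; rewrite lt_eqF // gt_eqF.
Qed.

Lemma large_radius (r E eta : R) : asym_slope < 0 -> 0 <= r -> 0 <= E -> 0 < eta ->
  exists Rr, [/\ 0 < Rr, r <= Rr &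
    8 * r ^+ 2 * ((asym_slope - slope Rr) + E / Rr) / (- asym_slope) < eta].
Proof.
move=> L0 r0 E0 eta0.
have nL : 0 < - asym_slope by rewrite oppr_gt0.
have r1 : 0 < r ^+ 2 + 1 by have := sqr_ge0 r; lra.
pose ep := eta * (- asym_slope) / (16 * (r ^+ 2 + 1)).
have ep0 : 0 < ep by rewrite divr_gt0 ?mulr_gt0.
have [s0 s00 Hs0] := asym_slope_adh ep0.
have Eep : 0 <= E / ep by rewrite divr_ge0 // ltW.
pose Rr := s0 + r + 1 + E / ep.
have R0 : 0 < Rr by rewrite /Rr; lra.
exists Rr; split => //; first by rewrite /Rr; lra.
have h1 : asym_slope - ep < slope Rr by apply: Hs0; rewrite /Rr; lra.
have h2 : E / Rr < ep.
  rewrite ltr_pdivrMr //; have : ep * (E / ep) = E by rewrite mulrC divfK // gt_eqF.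
  by rewrite /Rr; nra.
have h3 := slope_le_asym R0.
have h4 : 16 * ep * (r ^+ 2 + 1) = eta * (- asym_slope) by rewrite /ep; field; rewrite gt_eqF.
rewrite ltr_pdivrMr //.
have : 8 * r ^+ 2 * ((asym_slope - slope Rr) + E / Rr) <= 8 * r ^+ 2 * (2 * ep).
  by apply: ler_wpM2l; [rewrite mulr_ge0 // sqr_ge0|lra].
by have := sqr_ge0 r; nra.
Qed.

Lemma ballmin_ratio_near (e : R) : 0 < e ->
  exists S, forall s, S < s -> `|asym_slope - g (xs g o s) / s| < e.
Proof.
move=> e0; have e2 : 0 < e / 2 by rewrite divr_gt0.
have [s0 s00 Hs0] := asym_slope_adh e2.
have t0 : 0 <= 2 * `|g o| / e by rewrite divr_ge0 ?mulr_ge0 // ltW.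
exists (s0 + 2 * `|g o| / e) => s Ss.
have sp : 0 < s by lra.
have h1 := Hs0 s ltac:(lra); have h2 := slope_le_asym sp.
have -> : g (xs g o s) / s = slope s + g o / s by rewrite /slope /ballmin; field; rewrite gt_eqF.
have : `|g o / s| < e / 2.
  rewrite normrM normfV (gtr0_norm sp) ltr_pdivrMr //.
  have : 2 * `|g o| / e < s by lra.
  by rewrite ltr_pdivrMr //; lra.
by rewrite !ltr_norml => /andP[h4 h5]; apply/andP; split; lra.
Qed.

Lemma shrinking_rate_asym_slope : is_shrinking_rate g o (- asym_slope).
Proof.
apply/cvgrPdist_lt => e e0; have [S HS] := ballmin_ratio_near _ e0.
exists S; split; [exact: num_real|] => s Ss /=.
by have := HS s Ss; rewrite -normrN; congr (_ < _); congr (`|_|); ring.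
Qed.

(* g decreases linearly iff L < 0, as liminf g(x_s)/s = L. *)
Lemma decreases_linearlyP : decreases_linearly g o <-> asym_slope < 0.
Proof.
by rewrite /decreases_linearly (limf_einf_pinfty ballmin_ratio_near) lte_fin.
Qed.

End ConvexFun.

Section Perturbation.
Variables (g1 g2 : M -> R) (o : M) (C : R).
Hypotheses (gc1 : continuous g1) (gconv1 : convex_fun g1).
Hypotheses (gc2 : continuous g2) (gconv2 : convex_fun g2).
Hypothesis g12 : forall x, `|g1 x - g2 x| <= C.

Lemma unbounded_below_perturb : unbounded_below g1 -> unbounded_below g2.
Proof.
move=> ub r; have [x hx] := ub (r - C); exists x.
by have := g12 x; rewrite ler_norml => /andP[h1 h2]; lra.
Qed.

(* The minima on balls of g1 and g2 differ by at most C, so their slopes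
   differ by at most 2C/s. *)
Lemma asym_slope_le : asym_slope g1 o <= asym_slope g2 o.
Proof.
have C0 : 0 <= C := le_trans (normr_ge0 _) (g12 o).
apply/ler_addgt0Pr => e e0; have e2 : 0 < e / 2 by rewrite divr_gt0.
have [s0 s00 Hs0] := asym_slope_adh g1 o gc1 gconv1 e2.
have t0 : 0 <= 4 * C / e by rewrite divr_ge0 ?mulr_ge0 // ltW.
pose s := s0 + 4 * C / e + 1.
have sp : 0 < s by rewrite /s; lra.
have h1 := Hs0 s ltac:(rewrite /s; lra).
have h2 := slope_le_asym g2 o gc2 gconv2 sp.
have hm : ballmin g1 o s <= ballmin g2 o s + C.
  have := ballmin_le g1 o gc1 gconv1 (ltW sp) (xs_in_ball g2 o gc2 gconv2 (ltW sp)).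
  by have := g12 (xs g2 o s); rewrite ler_norml /ballmin => /andP[h3 h4]; lra.
have := g12 o; rewrite ler_norml => /andP[ho1 ho2].
have h3 : slope g1 o s - 2 * C / s <= slope g2 o s.
  by rewrite /slope -mulrBl; apply: ler_wpM2r; [rewrite invr_ge0 ltW|lra].
have h4 : 2 * C / s < e / 2.
  rewrite ltr_pdivrMr //; have : 4 * C / e < s by rewrite /s; lra.
  by rewrite ltr_pdivrMr //; lra.
lra.
Qed.

Lemma gamma_s_close : asym_slope g1 o = asym_slope g2 o -> asym_slope g1 o < 0 ->
  forall t, 0 <= t -> forall eta, 0 < eta -> exists S, forall a b, S < a -> S < b ->
    d (gamma_s g1 o a t) (gamma_s g2 o b t) < eta.
Proof.
move=> eL L0 t t0 eta eta0.
have C0 : 0 <= C := le_trans (normr_ge0 _) (g12 o).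
have L20 : asym_slope g2 o < 0 by rewrite -eL.
have [Rr [R0 tR Hb]] := large_radius g1 o gc1 gconv1 t C (eta ^+ 2) L0 t0 C0 (exprn_gt0 2 eta0).
exists Rr => a b Ra Rb; have [a0 b0] : 0 < a /\ 0 < b by split; lra.
have hRa : Rr <= d o (xs g1 o a) by rewrite (dist_xs g1 o gc1 gconv1 L0 (ltW a0)) ltW.
have hRb : Rr <= d o (xs g2 o b) by rewrite (dist_xs g2 o gc2 gconv2 L20 (ltW b0)) ltW.
have h1 := gamma_s_bound g1 o gc1 gconv1 a Rr L0 (ltW R0) (ltW Ra) a0.
have h2 := gamma_s_bound g2 o gc2 gconv2 b Rr L20 (ltW R0) (ltW Rb) b0.
rewrite -eL in h2; have := g12 (gamma_s g2 o b Rr); have := g12 o.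
rewrite !ler_norml => /andP[h3 h4] /andP[h5 h6].
have := geodesics_close g1 o gc1 gconv1 t Rr C L0 t0 tR R0 C0
  (gamma_s_spec g1 o a) (gamma_s_spec g2 o b) hRa hRb ltac:(lra).
by move=> h7; apply: lt_of_sqr_lt; [exact: mdist_ge0|exact: eta0|exact: le_lt_trans h7 Hb].
Qed.

Lemma fastest_geodesic_perturb (c : R -> M) :
  asym_slope g1 o = asym_slope g2 o -> asym_slope g1 o < 0 ->
  is_fastest_shrinking_geodesic g1 o c -> is_fastest_shrinking_geodesic g2 o c.
Proof.
move=> eL L0 hc t t0; apply/cvg_pinfty_mdistP => eta eta0.
have eta2 : 0 < eta / 2 by rewrite divr_gt0.
have [S1 HS1] := (cvg_pinfty_mdistP _ _).1 (hc t t0) _ eta2.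
have [S2 HS2] := gamma_s_close eL L0 t t0 (eta / 2) eta2.
exists S2 => b Sb; pose a := `|S1| + `|S2| + 1.
have [Sa1 Sa2] : S1 < a /\ S2 < a.
  by rewrite /a; have := ler_norm S1; have := ler_norm S2; have := normr_ge0 S1;
    have := normr_ge0 S2; split; lra.
have := metric_triangle (c t) (gamma_s g1 o a t) (gamma_s g2 o b t).
by have := HS1 a Sa1; have := HS2 a b Sa2 Sb; lra.
Qed.

End Perturbation.

(* The geodesics gamma_s converge pointwise: gamma_s_close for g1 = g2. *)
Lemma fastest_geodesic_exists (g : M -> R) (o : M) : continuous g -> convex_fun g ->
  asym_slope g o < 0 -> exists c, is_fastest_shrinking_geodesic g o c.
Proof.
move=> gc gconv L0; have g0 x : `|g x - g x| <= 0 by rewrite subrr normr0.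
have lim t : 0 <= t -> exists x : M, gamma_s g o s t @[s --> +oo] --> x.
  move=> t0; apply: (pinfty_cauchy_cvg hcomp) => eta eta0.
  exact: (gamma_s_close g g o 0 gc gconv gc gconv g0 erefl L0 t t0 eta eta0).
exists (fun t => xget o (fun x => gamma_s g o s t @[s --> +oo] --> x)).
by move=> t t0; exact: (xgetPex o (lim t t0)).
Qed.

End Complete.
End CAT0.

Theorem lemma4p7 (R : realType) (M : metricType R) (o : M) (f ft : M -> R) :
  hadamard_space (M := M) ->
  locally_compact [set: M] ->
  continuous f -> convex_fun f ->
  unbounded_below f -> decreases_linearly f o ->
  continuous ft -> convex_fun ft ->
  (exists C : R, forall x : M, `|f x - ft x| <= C) ->
  [/\ unbounded_below ft, decreases_linearly ft o,
      (exists c : R -> M,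
         is_fastest_shrinking_geodesic f o c /\ is_fastest_shrinking_geodesic ft o c)
    & (exists a : R, is_shrinking_rate f o a /\ is_shrinking_rate ft o a)].
Proof.
move=> [hcomp [hgeo hCN]] _ fc fconv fub fdec ftc ftconv [C HC].
have HC' x : `|ft x - f x| <= C by rewrite distrC.
have eL : asym_slope ft o = asym_slope f o.
  apply/le_anti; rewrite (asym_slope_le hCN hgeo hcomp _ _ o _ ftc ftconv fc fconv HC').
  by rewrite (asym_slope_le hCN hgeo hcomp _ _ o _ fc fconv ftc ftconv HC).
have L0 := (decreases_linearlyP hCN hgeo hcomp f o fc fconv).1 fdec.
have [c hc] := fastest_geodesic_exists hCN hgeo hcomp f o fc fconv L0.
split.
- exact: (unbounded_below_perturb _ _ _ HC fub).
- by apply/(decreases_linearlyP hCN hgeo hcomp ft o ftc ftconv); rewrite eL.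
- exists c; split => //.
  exact: (fastest_geodesic_perturb hCN hgeo hcomp _ _ o _ fc fconv ftc ftconv HC c (esym eL) L0 hc).
- exists (- asym_slope f o); split; first exact: shrinking_rate_asym_slope hCN hgeo hcomp f o fc fconv.
  by rewrite -eL; exact: shrinking_rate_asym_slope hCN hgeo hcomp ft o ftc ftconv.
Qed.
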